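(* Let $G=(V,E,(p_{uv})_{(u,v)\in E})$ be an influence graph. For every partial realisation $\psi$, all partial realisations $\hat\psi,\hat\psi'$ with $\hat\psi\subseteq\hat\psi'$, and every $v\in V$, we have $\Delta^2_\psi(v\mid\hat\psi)\ge\Delta^2_\psi(v\mid\hat\psi')$ (the strong 2-level diffusion model is strongly adaptive submodular).
   Context: $G$ is a directed graph with activation probabilities $p_{uv}\in[0,1]$. $\mathbf L,\hat{\mathbf L}$ are independent random subsets of $E$, each containing every edge $(u,w)$ independently with probability $p_{uw}$. For $L\subseteq E$, $T\subseteq V$, $\sigma_L(T)$ is the number of nodes reachable by a directed path (length $\ge0$) in $(V,L)$ from $T$. For $T\subseteq V$, $\mathbf L^2(T):=\mathbf L\cup(\hat{\mathbf L}\cap\{(u,w)\in E:u\in T\})$. Realisations: $\Phi(u):=\{u\}\cup\{z:(u,z)\in\mathbf L\}$, $\hat\Phi(u):=\{u\}\cup\{z:(u,z)\in\hat{\mathbf L}\}$. A partial realisation $\psi$ is the restriction of $u\mapsto\{u\}\cup\{z:(u,z)\in L\}$ (for some $L\subseteq E$) to a set $dom(\psi)\subseteq V$; $\psi\subseteq\psi'$ means $dom(\psi)\subseteq dom(\psi')$ and they agree on $dom(\psi)$; $\psi\subseteq\Phi$ is the event $\Phi(u)=\psi(u)$ for all $u\in dom(\psi)$ (similarly for $\hat\Phi$). For $T\subseteq V$, $\sigma^2_{\mathbf L,\hat{\mathbf L},\psi}(T):=\sigma_{\mathbf L^2(T\setminus dom(\psi))}(T)$. Define $\Delta^2_\psi(v\mid\hat\psi):=\mathbb{E}\big[\sigma^2_{\mathbf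 L,\hat{\mathbf L},\psi}(\{v\}\cup dom(\psi)\cup dom(\hat\psi))-\sigma^2_{\mathbf L,\hat{\mathbf L},\psi}(dom(\psi)\cup dom(\hat\psi))\,\big|\,\psi\subseteq\Phi,\hat\psi\subseteq\hat\Phi\big]$ (conditional expectations are taken on events of positive probability). *)

From HB Require Import structures.
From mathcomp Require Import all_boot all_order all_algebra.
Set Implicit Arguments. Unset Strict Implicit. Unset Printing Implicit Defensive.
Import Order.TTheory GRing.Theory Num.Theory.
Local Open Scope ring_scope.

Section Defs.
Variables (V : finType).

Definition sigma (L : {set V * V}) (T : {set V}) : nat :=
  #|[set x | [exists t in T, connect (fun a b => (a, b) \in L) t x]]|.

Definition L2 (L Lh : {set V * V}) (T : {set V}) : {set V * V} :=
  L :|: [set e in Lh | e.1 \in T].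

Definition Phi (L : {set V * V}) (u : V) : {set V} :=
  u |: [set z | (u, z) \in L].

(* A partial realisation is a partial map V -> {set V} (None = outside the domain) *)
Definition preal := V -> option {set V}.

Definition dom (psi : preal) : {set V} := [set u | psi u != None].

Definition is_partial_realisation (E : {set V * V}) (psi : preal) : Prop :=
  exists L : {set V * V}, L \subset E /\
    forall u, u \in dom psi -> psi u = Some (Phi L u).

Definition preal_sub (psi psi' : preal) : Prop :=
  dom psi \subset dom psi' /\ forall u, u \in dom psi -> psi' u = psi u.

Definition consistent (psi : preal) (L : {set V * V}) : bool :=
  [forall u, (u \in dom psi) ==> (psi u == Some (Phi L u))].

Definition sigma2 (psi : preal) (L Lh : {set V * V}) (T : {set V}) : nat :=
  sigma (L2 L Lh (T :\: dom psi)) T.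

Variables (R : realFieldType) (E : {set V * V}) (p : V -> V -> R).

Definition probL (L : {set V * V}) : R :=
  \prod_(e in E) (if e \in L then p e.1 e.2 else 1 - p e.1 e.2).

Definition prob_event (psi psih : preal) : R :=
  \sum_(L : {set V * V} | L \subset E) \sum_(Lh : {set V * V} | Lh \subset E)
    probL L * probL Lh * (consistent psi L && consistent psih Lh)%:R.

Definition Delta2 (psi psih : preal) (v : V) : R :=
  (\sum_(L : {set V * V} | L \subset E) \sum_(Lh : {set V * V} | Lh \subset E)
    probL L * probL Lh * (consistent psi L && consistent psih Lh)%:R *
    ((sigma2 psi L Lh (v |: (dom psi :|: dom psih)))%:R
       - (sigma2 psi L Lh (dom psi :|: dom psih))%:R))
  / prob_event psi psih.

End Defs.

From HB Require Import structures.
From mathcomp Require Import all_boot all_order all_algebra.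
From mathcomp Require Import ring lra.
Set Implicit Arguments. Unset Strict Implicit. Unset Printing Implicit Defensive.
Import Order.TTheory GRing.Theory Num.Theory.
Local Open Scope ring_scope.

(* For fixed edge sets, T |-> sigma^2(T) is the cardinality of a monotone set
   map whose value on T :|: T' lies in the union of its values on T and T':
   the extra edges of Lh used from T :|: T' all leave a seed of T or of T'.
   Hence it is submodular, and the gain of v can only shrink when the seed set
   grows from dom psi :|: dom psih to dom psi :|: dom psih'.  Conditioning on
   psih' instead of psih further constrains only the edges of Lh leaving
   A = dom psih' :\: dom psih.  When v is not already seeded, the gain at the
   smaller seed set ignores those edges, so by independence of the edges the
   extra conditioning leaves its conditional expectation unchanged. *)

Section SetFacts.
Variable T : finType.
Implicit Types (f : {set T} -> {set T}) (A B E S X Y : {set T}).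

Lemma card_setU_setI_le f A B :
  {homo f : X Y / X \subset Y} ->
  f (A :|: B) \subset f A :|: f B ->
  (#|f (A :|: B)| + #|f (A :&: B)| <= #|f A| + #|f B|)%N.
Proof.
move=> f_mono f_subU; rewrite -(cardsUI (f A)) leq_add ?subset_leq_card //.
by rewrite subsetI !f_mono ?subsetIl ?subsetIr.
Qed.

Lemma setIU_part E S X Y : X \subset E :&: S -> Y \subset E :\: S ->
  (X :|: Y) :&: S = X.
Proof.
move=> /subsetP XS /subsetP YS; apply/setP => e; rewrite !inE.
by case: (boolP (e \in X)) => [/XS|_]; case: (boolP (e \in Y)) => [/YS|_];
  rewrite ?inE /=; case: (e \in S); rewrite ?andbF ?andbT.
Qed.

Lemma setDU_part E S X Y : X \subset E :&: S -> Y \subset E :\: S ->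
  (X :|: Y) :\: S = Y.
Proof.
move=> /subsetP XS /subsetP YS; apply/setP => e; rewrite !inE.
by case: (boolP (e \in X)) => [/XS|_]; case: (boolP (e \in Y)) => [/YS|_];
  rewrite ?inE /=; case: (e \in S); rewrite ?andbF ?andbT.
Qed.

End SetFacts.

Section Reach.
Variable V : finType.
Implicit Types (G : {set V * V}) (T : {set V}).

Definition reach G T :=
  [set x | [exists t in T, connect (fun a b => (a, b) \in G) t x]].

Lemma reach_src G T x : x \in T -> x \in reach G T.
Proof. by move=> xT; rewrite inE; apply/existsP; exists x; rewrite xT connect0. Qed.

Lemma reach_step G T a b : a \in reach G T -> (a, b) \in G -> b \in reach G T.
Proof.
rewrite !inE => /existsP [t /andP [tT ct]] ab; apply/existsP; exists t.
by rewrite tT (connect_trans ct) ?connect1.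
Qed.

Lemma reach_min G T (P : {set V}) : T \subset P ->
  (forall a b, a \in P -> (a, b) \in G -> b \in P) -> reach G T \subset P.
Proof.
move=> /subsetP TP P_closed; apply/subsetP => x; rewrite inE.
case/existsP => t /andP [/TP tP /connectP [s + ->]].
by elim: s t tP => [|y s IHs] t tP //= /andP [ty]; apply: IHs; apply: P_closed ty.
Qed.

Lemma reach_mono G G' T T' : G \subset G' -> T \subset T' ->
  reach G T \subset reach G' T'.
Proof.
move=> /subsetP GG' /subsetP TT'; apply: reach_min => [|a b aR /GG'].
  by apply/subsetP => x /TT'; apply: reach_src.
exact: reach_step.
Qed.

End Reach.

Section Spread.
Variable V : finType.
Implicit Types (psi : preal V) (L Lh : {set V * V}) (A T : {set V}).

Definition out_edges A : {set V * V} := [set e | e.1 \in A].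

Lemma in_out_edges A e : (e \in out_edges A) = (e.1 \in A).
Proof. by rewrite inE. Qed.

Lemma L2E L Lh T : L2 L Lh T = L :|: Lh :&: out_edges T.
Proof. by apply/setP => e; rewrite !inE. Qed.

Definition spread psi L Lh T := reach (L2 L Lh (T :\: dom psi)) T.

Lemma sigma2E psi L Lh T : sigma2 psi L Lh T = #|spread psi L Lh T|.
Proof. by []. Qed.

Lemma spread_mono psi L Lh : {homo spread psi L Lh : T T' / T \subset T'}.
Proof.
move=> T T' TT'; apply: reach_mono => //; rewrite !L2E setUS ?setIS //.
by apply/subsetP => e; rewrite !inE => /andP [-> /(subsetP TT') ->].
Qed.

Lemma spread_subU psi L Lh T T' :
  spread psi L Lh (T :|: T') \subset spread psi L Lh T :|: spread psi L Lh T'.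
Proof.
apply: reach_min => [|a b aR].
  by apply: setUSS; apply/subsetP => x; apply: reach_src.
rewrite L2E => /setUP [abL | /setIP [abLh]].
  by case/setUP: aR => aR; rewrite in_setU (reach_step aR) ?orbT // L2E inE abL.
rewrite inE /= in_setD in_setU => /andP [adp /orP [aT | aT']]; rewrite in_setU.
  by rewrite (reach_step (reach_src _ aT)) // L2E in_setU in_setI abLh
     in_out_edges in_setD adp aT orbT.
by rewrite (reach_step (reach_src _ aT')) ?orbT // L2E in_setU in_setI abLh
   in_out_edges in_setD adp aT' orbT.
Qed.

Lemma sigma2_setU1 psi L Lh T v :
  (sigma2 psi L Lh T <= sigma2 psi L Lh (v |: T))%N.
Proof. by rewrite !sigma2E subset_leq_card // spread_mono // subsetUr. Qed.

Lemma sigma2_submod psi L Lh T T' v : T \subset T' ->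
  (sigma2 psi L Lh (v |: T') + sigma2 psi L Lh T
     <= sigma2 psi L Lh (v |: T) + sigma2 psi L Lh T')%N.
Proof.
move=> TT'; rewrite !sigma2E.
have -> : v |: T' = (v |: T) :|: T' by rewrite -setUA (setUidPr TT').
apply: leq_trans (card_setU_setI_le (spread_mono _ _ _) (spread_subU _ _ _ _ _)).
by rewrite leq_add2l subset_leq_card // spread_mono // subsetI subsetUr TT'.
Qed.

End Spread.

Section Locality.
Variable V : finType.
Implicit Types (psi : preal V) (L Lh : {set V * V}) (A T : {set V}).

Lemma Phi_setI_out_edges L A u : u \in A -> Phi (L :&: out_edges A) u = Phi L u.
Proof. by move=> uA; apply/setP => z; rewrite !inE /= uA andbT. Qed.

Lemma Phi_setD_out_edges L A u : u \notin A -> Phi (L :\: out_edges A) u = Phi L u.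
Proof. by move=> uA; apply/setP => z; rewrite !inE /= (negbTE uA). Qed.

Lemma consistent_setI_out_edges psi L A : dom psi \subset A ->
  consistent psi (L :&: out_edges A) = consistent psi L.
Proof.
move=> /subsetP domA; apply: eq_forallb => u.
by case: (boolP (u \in dom psi)) => //= /domA uA; rewrite Phi_setI_out_edges.
Qed.

Lemma consistent_setD_out_edges psi L A : [disjoint dom psi & A] ->
  consistent psi (L :\: out_edges A) = consistent psi L.
Proof.
move=> domA; apply: eq_forallb => u.
case: (boolP (u \in dom psi)) => //= u_dom.
by rewrite Phi_setD_out_edges // (disjointFr domA u_dom).
Qed.

Lemma sigma2_setD_out_edges psi L Lh A T : [disjoint T :\: dom psi & A] ->
  sigma2 psi L (Lh :\: out_edges A) T = sigma2 psi L Lh T.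
Proof.
move=> TA; rewrite /sigma2 !L2E; congr (sigma (_ :|: _) _); apply/setP => e.
rewrite !in_setI in_setD !in_out_edges.
by case eT: (e.1 \in T :\: dom psi); rewrite ?andbF // (disjointFr TA eT) andbT.
Qed.

Definition restrict psi A : preal V := fun u => if u \in A then psi u else None.

Lemma restrict_in psi A u : u \in A -> restrict psi A u = psi u.
Proof. by rewrite /restrict => ->. Qed.

Lemma dom_restrict psi A : dom (restrict psi A) = dom psi :&: A.
Proof.
by apply/setP => u; rewrite !inE /restrict; case: (u \in A); rewrite ?andbT ?andbF ?eqxx.
Qed.

Lemma consistent_preal_sub psi psi' L : preal_sub psi psi' ->
  consistent psi' L = consistent psi L && consistent (restrict psi' (dom psi' :\: dom psi)) L.
Proof.
case=> /subsetP sub eq_psi; rewrite /consistent dom_restrict.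
apply/forallP/andP => [H | [/forallP H1 /forallP H2] u].
  split; apply/forallP => u; apply/implyP => u_dom.
    by rewrite -eq_psi //; apply: (implyP (H u)); apply: sub.
  move: u_dom; rewrite in_setI => /andP [u' uA].
  by rewrite restrict_in //; apply: (implyP (H u)).
apply/implyP => u'; case: (boolP (u \in dom psi)) => u_dom.
  by rewrite eq_psi //; apply: (implyP (H1 u)).
have uA : u \in dom psi' :\: dom psi by rewrite in_setD u_dom u'.
by have := implyP (H2 u); rewrite in_setI restrict_in // u' uA; apply.
Qed.

End Locality.

Definition expect (V : finType) (R : realFieldType) (E : {set V * V}) (p : V -> V -> R)
  (h : {set V * V} -> R) : R :=
  \sum_(L : {set V * V} | L \subset E) probL E p L * h L.

Section ProductMeasure.
Variables (V : finType) (R : realFieldType) (p : V -> V -> R).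
Implicit Types (E S L X Y : {set V * V}) (h : {set V * V} -> R).

Lemma probL_setU E S X Y : X \subset E :&: S -> Y \subset E :\: S ->
  probL E p (X :|: Y) = probL (E :&: S) p X * probL (E :\: S) p Y.
Proof.
move=> XS YS; rewrite /probL (bigID (mem S)) /=.
congr (_ * _); apply: eq_big => e.
- by rewrite in_setI.
- by move=> /andP [_ eS]; rewrite -[in RHS](setIU_part XS YS) in_setI eS andbT.
- by rewrite in_setD andbC.
- by move=> /andP [_ eS]; rewrite -[in RHS](setDU_part XS YS) in_setD eS.
Qed.

Lemma expect_split E S h : expect E p h =
  \sum_(X : {set V * V} | X \subset E :&: S) \sum_(Y : {set V * V} | Y \subset E :\: S)
     probL (E :&: S) p X * probL (E :\: S) p Y * h (X :|: Y).
Proof.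
rewrite /expect pair_big /=.
rewrite (reindex_onto (fun XY => XY.1 :|: XY.2) (fun L => (L :&: S, L :\: S))) /=;
  last by move=> L _; apply: setID.
have part (XY : {set V * V} * {set V * V}) :
    (XY.1 :|: XY.2 \subset E) && (((XY.1 :|: XY.2) :&: S, (XY.1 :|: XY.2) :\: S) == XY)
    = (XY.1 \subset E :&: S) && (XY.2 \subset E :\: S).
  case: XY => X Y /=; apply/andP/andP => [[XYE /eqP [eX eY]] | [XS YS]].
    by split; [rewrite -{1}eX; apply: setSI | rewrite -{1}eY; apply: setSD].
  rewrite (setIU_part XS YS) (setDU_part XS YS) eqxx subUset.
  by rewrite (subset_trans XS (subsetIl _ _)) (subset_trans YS (subsetDl _ _)).
apply: eq_big => [XY | [X Y]]; first exact: part.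
by rewrite part => /andP [XS YS]; rewrite (probL_setU XS YS).
Qed.

Lemma expect1 E : expect E p (fun=> 1) = 1.
Proof.
move: {2}#|E| (leqnn #|E|) => n; elim: n E => [|n IHn] E.
  rewrite leqn0 cards_eq0 => /eqP ->.
  rewrite /expect (big_pred1 set0) => [|L]; last by rewrite subset0.
  by rewrite /probL big_set0 mulr1.
have [-> _ | [e eE] cardE] := set_0Vmem E; first by apply: IHn; rewrite cards0.
have mass_e : \sum_(X : {set V * V} | X \subset [set e]) probL [set e] p X = 1.
  have e_neq0 : [set e] != set0 by apply/set0Pn; exists e; rewrite set11.
  rewrite (bigD1 set0) ?sub0set //= (bigD1 [set e]) ?subxx ?e_neq0 //= big1 ?addr0 => [|X].
    by rewrite /probL !big_set1 !inE eqxx subrK.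
  by rewrite subset1; case: (X == [set e]); case: (X == set0).
have mass_rest : expect (E :\: [set e]) p (fun=> 1) = 1.
  by apply: IHn; move: cardE; rewrite (cardsD1 e E) eE.
transitivity ((\sum_(X : {set V * V} | X \subset [set e]) probL [set e] p X) *
               expect (E :\ e) p (fun=> 1)); last by rewrite mass_e mass_rest mulr1.
rewrite (expect_split _ [set e]) (setIidPr _) ?sub1set // big_distrl.
apply: eq_bigr => X _; rewrite /expect big_distrr; apply: eq_bigr => Y _ /=.
by rewrite !mulr1.
Qed.

Lemma expect_setI E S h : (forall L, h (L :&: S) = h L) ->
  expect E p h = expect (E :&: S) p h.
Proof.
move=> hS; rewrite (expect_split _ S).
transitivity (\sum_(X : {set V * V} | X \subset E :&: S)
                probL (E :&: S) p X * h X * expect (E :\: S) p (fun=> 1));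
  last by apply: eq_bigr => X _; rewrite expect1 mulr1.
apply: eq_bigr => X XS; rewrite /expect big_distrr; apply: eq_bigr => Y YS /=.
by rewrite -hS (setIU_part XS YS) mulr1 mulrAC.
Qed.

Lemma expect_setD E S h : (forall L, h (L :\: S) = h L) ->
  expect E p h = expect (E :\: S) p h.
Proof. by move=> hS; rewrite setDE; apply: expect_setI => L; rewrite -setDE. Qed.

Lemma expect_indep E S c f :
  (forall L, c (L :&: S) = c L) -> (forall L, f (L :\: S) = f L) ->
  expect E p (fun L => c L * f L) = expect E p c * expect E p f.
Proof.
move=> cS fS; rewrite (expect_setI _ cS) (expect_setD _ fS) big_distrlr (expect_split _ S).
apply: eq_bigr => X XS; apply: eq_bigr => Y YS /=.
by rewrite -cS -fS (setIU_part XS YS) (setDU_part XS YS) mulrACA.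
Qed.

End ProductMeasure.

Section ProbabilityWeights.
Variables (V : finType) (R : realFieldType) (E : {set V * V}) (p : V -> V -> R).
Hypothesis hp : forall u w, (u, w) \in E -> 0 <= p u w <= 1.
Implicit Types (L : {set V * V}) (h : {set V * V} -> R).

Lemma probL_ge0 L : 0 <= probL E p L.
Proof.
apply: prodr_ge0 => -[u w] /hp /andP [p_ge0 p_le1] /=.
by case: ifP => _ //; rewrite subr_ge0.
Qed.

Lemma ler_expect h h' : (forall L, L \subset E -> h L <= h' L) ->
  expect E p h <= expect E p h'.
Proof. by move=> hh'; apply: ler_sum => L /hh'; apply: ler_wpM2l; apply: probL_ge0. Qed.

Lemma expect_ge0 h : (forall L, L \subset E -> 0 <= h L) -> 0 <= expect E p h.
Proof. by move=> h_ge0; apply: sumr_ge0 => L /h_ge0; apply: mulr_ge0; apply: probL_ge0. Qed.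

End ProbabilityWeights.

Section MarginalGain.
Variables (V : finType) (R : realFieldType) (E : {set V * V}) (p : V -> V -> R).
Hypothesis hp : forall u w, (u, w) \in E -> 0 <= p u w <= 1.
Implicit Types (psi psih : preal V) (L Lh : {set V * V}) (A T : {set V}).

Definition gain psi L Lh T v : R :=
  (sigma2 psi L Lh (v |: T))%:R - (sigma2 psi L Lh T)%:R.

Lemma gain_ge0 psi L Lh T v : 0 <= gain psi L Lh T v.
Proof. by rewrite subr_ge0 ler_nat sigma2_setU1. Qed.

Lemma gain_seeded psi L Lh T v : v \in T -> gain psi L Lh T v = 0.
Proof. by move=> vT; rewrite /gain (setUidPr _) ?sub1set ?subrr. Qed.

Lemma gain_antitone psi L Lh T T' v : T \subset T' ->
  gain psi L Lh T' v <= gain psi L Lh T v.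
Proof.
move=> /(sigma2_submod psi L Lh v); rewrite -(ler_nat R) !natrD /gain; lra.
Qed.

Lemma gain_setD_out_edges psi L Lh A T v : [disjoint (v |: T) :\: dom psi & A] ->
  gain psi L (Lh :\: out_edges A) T v = gain psi L Lh T v.
Proof.
move=> vTA; have TA : [disjoint T :\: dom psi & A].
  by apply: disjointWl vTA; apply: setSD; apply: subsetUr.
by rewrite /gain !sigma2_setD_out_edges.
Qed.

Definition weighted_gain psi Lh T v : R :=
  expect E p (fun L => (consistent psi L)%:R * gain psi L Lh T v).

Lemma weighted_gain_ge0 psi Lh T v : 0 <= weighted_gain psi Lh T v.
Proof. by apply: expect_ge0 => // L _; rewrite mulr_ge0 ?ler0n ?gain_ge0. Qed.

Lemma weighted_gain_antitone psi Lh T T' v : T \subset T' ->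
  weighted_gain psi Lh T' v <= weighted_gain psi Lh T v.
Proof.
by move=> TT'; apply: ler_expect => // L _; rewrite ler_wpM2l ?ler0n ?gain_antitone.
Qed.

Lemma weighted_gain_setD_out_edges psi Lh A T v :
  [disjoint (v |: T) :\: dom psi & A] ->
  weighted_gain psi (Lh :\: out_edges A) T v = weighted_gain psi Lh T v.
Proof. by move=> vTA; apply: eq_bigr => L _; rewrite gain_setD_out_edges. Qed.

Lemma prob_eventE psi psih : prob_event E p psi psih =
  expect E p (fun L => (consistent psi L)%:R) * expect E p (fun Lh => (consistent psih Lh)%:R).
Proof.
rewrite big_distrlr; apply: eq_bigr => L _; apply: eq_bigr => Lh _ /=.
by rewrite -mulnb natrM mulrACA.
Qed.

Lemma prob_event_ge0 psi psih : 0 <= prob_event E p psi psih.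
Proof. by rewrite prob_eventE mulr_ge0 //; apply: expect_ge0 => // L _; rewrite ler0n. Qed.

Lemma Delta2E psi psih v : Delta2 E p psi psih v =
  expect E p (fun Lh => (consistent psih Lh)%:R *
                        weighted_gain psi Lh (dom psi :|: dom psih) v)
  / prob_event E p psi psih.
Proof.
congr (_ / _); rewrite exchange_big; apply: eq_bigr => Lh _.
rewrite /weighted_gain /expect !big_distrr; apply: eq_bigr => L _ /=.
by rewrite -mulnb natrM /gain; ring.
Qed.

Lemma Delta2_ge0 psi psih v : 0 <= Delta2 E p psi psih v.
Proof.
rewrite Delta2E divr_ge0 ?prob_event_ge0 //.
by apply: expect_ge0 => // Lh _; rewrite mulr_ge0 ?ler0n ?weighted_gain_ge0.
Qed.

Lemma Delta2_seeded psi psih v : v \in dom psi :|: dom psih -> Delta2 E p psi psih v = 0.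
Proof.
move=> vD; rewrite Delta2E /expect big1 ?mul0r // => Lh _.
by rewrite /weighted_gain /expect big1 ?mulr0 // => L _; rewrite gain_seeded ?mulr0.
Qed.

Lemma Delta2_antitone psi psih psih' v : preal_sub psih psih' ->
  Delta2 E p psi psih' v <= Delta2 E p psi psih v.
Proof.
move=> sub_psih; have [vD' | vD'] := boolP (v \in dom psi :|: dom psih').
  by rewrite Delta2_seeded // Delta2_ge0.
set A := dom psih' :\: dom psih; set D := dom psi :|: dom psih.
pose c Lh : R := (consistent (restrict psih' A) Lh)%:R.
pose q Lh : R := (consistent psih Lh)%:R.
pose g Lh := q Lh * weighted_gain psi Lh D v.
have psih_A : [disjoint dom psih & A].
  by rewrite disjoints_subset; apply/subsetP => u; rewrite in_setC in_setD => ->.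
have vD_A : [disjoint (v |: D) :\: dom psi & A].
  rewrite disjoints_subset; apply/subsetP => u; move: vD'.
  rewrite in_setC !in_setD !in_setU1 !in_setU negb_or => /andP [_ vh'].
  case/andP => udp /or3P [/eqP -> | udp' | -> //]; first by rewrite (negbTE vh') andbF.
  by rewrite udp' in udp.
have c_local Lh : c (Lh :&: out_edges A) = c Lh.
  by rewrite /c consistent_setI_out_edges // dom_restrict subsetIr.
have q_local Lh : q (Lh :\: out_edges A) = q Lh by rewrite /q consistent_setD_out_edges.
have g_local Lh : g (Lh :\: out_edges A) = g Lh.
  by rewrite /g q_local weighted_gain_setD_out_edges.
have cons' Lh : (consistent psih' Lh)%:R = c Lh * q Lh :> R.
  by rewrite (consistent_preal_sub _ sub_psih) -natrM mulnb andbC.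
have P_psih' : prob_event E p psi psih' =
    expect E p (fun L => (consistent psi L)%:R) * (expect E p c * expect E p q).
  rewrite prob_eventE -(expect_indep _ _ c_local q_local); congr (_ * _).
  by apply: eq_bigr => Lh _; rewrite cons'.
have [Pc0 | Pc_neq0] := eqVneq (expect E p c) 0.
  by rewrite /Delta2 P_psih' Pc0 mul0r mulr0 invr0 mulr0 Delta2_ge0.
apply: (@le_trans _ _ (expect E p (fun Lh => c Lh * g Lh) / prob_event E p psi psih')).
  rewrite Delta2E ler_wpM2r ?invr_ge0 ?prob_event_ge0 //.
  apply: ler_expect => // Lh _; rewrite cons' -mulrA ler_wpM2l ?ler_wpM2l ?ler0n //.
  by apply: weighted_gain_antitone; apply: setUS; case: sub_psih.
rewrite P_psih' (expect_indep _ _ c_local g_local) Delta2E prob_eventE.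
by rewrite [_ * (_ * _)]mulrCA invfM mulrACA mulfV // mul1r.
Qed.

End MarginalGain.

Theorem lemma14 (V : finType) (R : realFieldType) (E : {set V * V})
    (p : V -> V -> R)
    (hp : forall u w, (u, w) \in E -> 0 <= p u w <= 1)
    (psi psih psih' : preal V)
    (Hpsi : is_partial_realisation E psi)
    (Hpsih : is_partial_realisation E psih)
    (Hpsih' : is_partial_realisation E psih')
    (Hsub : preal_sub psih psih')
    (Hpos : 0 < prob_event E p psi psih)
    (Hpos' : 0 < prob_event E p psi psih')
    (v : V) :
  Delta2 E p psi psih' v <= Delta2 E p psi psih v.
Proof.
exact: (Delta2_antitone hp psi v Hsub).
Qed.
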